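(* Let $P$ be a finite set of real numbers with $0\in P$, and let $a=(a_n)$ be a sequence of real numbers such that $\sum_n a_n$ is absolutely convergent and $|a_n|\ge|a_{n+1}|>0$ for all $n\in\mathbb N$. Then there exists a sequence $((x_n,y_n))_n$ in $\mathbb R^2$ with $\sum_n(|x_n|+|y_n|)<\infty$ such that $E(x_n,y_n)_0=S(P,a)$.
   Context: For an absolutely convergent series $\sum_n v_n$ in $\mathbb R^2$, its achievement set is $E(v_n)=\{\sum_{n=1}^\infty \varepsilon_n v_n : (\varepsilon_n)\in\{0,1\}^{\mathbb N}\}$; $E(x_n,y_n)$ denotes the achievement set of $((x_n,y_n))_n$. For $A\subset\mathbb R^2$ and $c\in\mathbb R$, $A_c=\{s\in\mathbb R:(s,c)\in A\}$. The set of $P$-sums is $S(P,a)=\{\sum_{n=1}^\infty \varepsilon_n a_n : (\varepsilon_n)\in P^{\mathbb N}\}$. *)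

From Stdlib Require Import Reals List.
From Coquelicot Require Import Coquelicot.
Open Scope R_scope.

Definition achievement_set2 (x y : nat -> R) : R -> R -> Prop :=
  fun u v => exists eps : nat -> bool,
    is_series (fun n => if eps n then x n else 0) u /\
    is_series (fun n => if eps n then y n else 0) v.

Definition slice (A : R -> R -> Prop) (c : R) : R -> Prop := fun s => A s c.

Definition P_sums (P : list R) (a : nat -> R) : R -> Prop :=
  fun s => exists eps : nat -> R,
    (forall n, In (eps n) P) /\ is_series (fun n => eps n * a n) s.

From Stdlib Require Import Reals List Lia Lra ClassicalEpsilon.
From Coquelicot Require Import Coquelicot.
Open Scope R_scope.

(* Arrange the vectors in blocks of length |P| + 1: in block n the x-coordinates
   are p * a_n for p in P followed by 0, and the y-coordinates are r^n on the
   first |P| entries and -r^n on the last one, where r = 1/(|P|+2).  A 0/1 choice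
   whose y-sum vanishes gives sum_n (c_n - b_n) r^n = 0 with integer digits
   c_n - b_n in [-|P|, |P|]; since |P| r/(1 - r) < 1 all digits vanish, so every
   block selects at most one element of P and the x-sum is a P-sum (0 in P covers
   the empty choice).  Conversely, a P-sum is realised by choosing in each block
   the required element together with the last entry.  Absolute convergence lets
   one pass between the series and its block sums in both directions. *)

Fixpoint psum (f : nat -> R) (k : nat) : R :=
  match k with O => 0 | S k' => psum f k' + f k' end.

Lemma sum_n_psum f N : sum_n f N = psum f (S N).
Proof.
  induction N as [|N IH].
  - rewrite sum_O; simpl; now rewrite Rplus_0_l.
  - rewrite sum_Sn, IH; reflexivity.
Qed.

Lemma psum_add f m k :
  psum f (m + k) = psum f m + psum (fun j => f (m + j)%nat) k.
Proof.
  induction k as [|k IH]; simpl.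
  - rewrite Nat.add_0_r; ring.
  - rewrite Nat.add_succ_r; simpl; rewrite IH; ring.
Qed.

Lemma psum_ext f g k :
  (forall j, (j < k)%nat -> f j = g j) -> psum f k = psum g k.
Proof.
  induction k as [|k IH]; intros H; simpl; auto.
  rewrite IH by (intros; apply H; lia).
  rewrite H by lia; reflexivity.
Qed.

Lemma psum_mult_r f c k : psum (fun j => f j * c) k = psum f k * c.
Proof. induction k as [|k IH]; simpl; [ring | rewrite IH; ring]. Qed.

Lemma psum_const c k : psum (fun _ => c) k = INR k * c.
Proof. induction k as [|k IH]; simpl psum; [simpl; ring | rewrite IH, S_INR; ring]. Qed.

Lemma psum_nonneg f k : (forall j, 0 <= f j) -> 0 <= psum f k.
Proof. intros H; induction k as [|k IH]; simpl; [lra | specialize (H k); lra]. Qed.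

Lemma psum_le_mono f k k' :
  (forall j, 0 <= f j) -> (k <= k')%nat -> psum f k <= psum f k'.
Proof.
  intros H Hk; replace k' with (k + (k' - k))%nat by lia.
  rewrite psum_add.
  pose proof (psum_nonneg (fun j => f (k + j)%nat) (k' - k) (fun j => H _)); lra.
Qed.

Lemma psum_delta (f : nat -> R) t k :
  (t < k)%nat -> psum (fun j => if Nat.eqb j t then f j else 0) k = f t.
Proof.
  induction k as [|k IH]; intros Ht; [lia|]; simpl.
  destruct (Nat.eqb_spec k t) as [<-|Hkt].
  - rewrite (psum_ext _ (fun _ => 0)), psum_const; [ring|].
    intros j Hj; destruct (Nat.eqb_spec j k); [lia | reflexivity].
  - rewrite IH by lia; ring.
Qed.

Fixpoint count_true (g : nat -> bool) (k : nat) : nat :=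
  match k with O => O | S k' => (count_true g k' + if g k' then 1 else 0)%nat end.

Lemma count_true_le g k : (count_true g k <= k)%nat.
Proof. induction k as [|k IH]; simpl; [lia | destruct (g k); lia]. Qed.

Lemma psum_indicator (g : nat -> bool) c k :
  psum (fun j => if g j then c else 0) k = INR (count_true g k) * c.
Proof.
  induction k as [|k IH]; simpl; [ring|].
  rewrite IH, plus_INR; destruct (g k); simpl; ring.
Qed.

Lemma psum_select_none (g : nat -> bool) f k :
  count_true g k = O -> psum (fun j => if g j then f j else 0) k = 0.
Proof.
  induction k as [|k IH]; simpl; auto; intros H.
  destruct (g k); [lia|]; rewrite IH by lia; ring.
Qed.

Lemma psum_select_In (P : list R) (g : nat -> bool) f k :
  In 0 P -> (forall j, (j < k)%nat -> In (f j) P) -> (count_true g k <= 1)%nat ->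
  In (psum (fun j => if g j then f j else 0) k) P.
Proof.
  intros H0 Hf; induction k as [|k IH]; simpl; auto; intros Hc.
  destruct (g k).
  - rewrite psum_select_none, Rplus_0_l by lia; apply Hf; lia.
  - rewrite Rplus_0_r; apply IH; [intros; apply Hf | ]; lia.
Qed.

Definition blocksum (B : nat) (f : nat -> R) (n : nat) : R :=
  psum (fun j => f (n * B + j)%nat) B.

Lemma psum_blocksum B f N : psum f (N * B) = psum (blocksum B f) N.
Proof.
  induction N as [|N IH]; simpl; auto.
  replace (B + N * B)%nat with (N * B + B)%nat by lia.
  rewrite psum_add, IH; reflexivity.
Qed.

Lemma sum_n_blocksum B f N : (0 < B)%nat ->
  sum_n f (S N * B - 1) = sum_n (blocksum B f) N.
Proof.
  intros HB; rewrite !sum_n_psum, <- psum_blocksum.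
  f_equal; simpl; lia.
Qed.

Lemma is_series_blocksum B f l : (0 < B)%nat ->
  is_series f l -> is_series (blocksum B f) l.
Proof.
  intros HB H; change (is_lim_seq (sum_n (blocksum B f)) l).
  apply (is_lim_seq_ext (fun N => sum_n f (S N * B - 1))).
  { intros N; apply sum_n_blocksum, HB. }
  apply (is_lim_seq_subseq (sum_n f) l); [|exact H].
  apply eventually_subseq; intros n; simpl; nia.
Qed.

Lemma is_series_of_blocksum B f l : (0 < B)%nat ->
  ex_series f -> is_series (blocksum B f) l -> is_series f l.
Proof.
  intros HB [l' Hf] Hb.
  replace l with l'; [exact Hf|].
  rewrite <- (is_series_unique _ _ Hb).
  symmetry; apply is_series_unique, is_series_blocksum; assumption.
Qed.

Lemma ex_series_of_blocksum_nonneg B f : (0 < B)%nat ->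
  (forall i, 0 <= f i) -> ex_series (blocksum B f) -> ex_series f.
Proof.
  intros HB Hf [l Hb].
  assert (Hb0 : forall n, 0 <= blocksum B f n) by (intros; apply psum_nonneg; auto).
  destruct (ex_finite_lim_seq_incr (sum_n f) l) as [l' Hl].
  - intros n; rewrite sum_Sn; unfold plus; simpl; specialize (Hf (S n)); lra.
  - intros n; rewrite sum_n_psum.
    apply Rle_trans with (psum f (S n * B)); [apply psum_le_mono; auto; nia|].
    rewrite psum_blocksum, <- sum_n_psum.
    apply (is_lim_seq_incr_compare (sum_n (blocksum B f)) l Hb).
    intros k; rewrite sum_Sn; unfold plus; simpl; specialize (Hb0 (S k)); lra.
  - exists l'; exact Hl.
Qed.

Definition blockwise {T : Type} (B : nat) (f : nat -> nat -> T) (i : nat) : T :=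
  f (i / B)%nat (i mod B)%nat.

Lemma blockwise_at {T : Type} B (f : nat -> nat -> T) n j :
  (j < B)%nat -> blockwise B f (n * B + j) = f n j.
Proof.
  intros Hj; unfold blockwise.
  assert (Hdiv : ((n * B + j) / B = n)%nat).
  { rewrite Nat.div_add_l, Nat.div_small by lia; lia. }
  rewrite Hdiv; f_equal.
  rewrite Nat.Div0.mod_eq, Hdiv; lia.
Qed.

Lemma is_series_power_head_bound (m : nat -> R) K r :
  0 < r < 1 -> (forall n, Rabs (m n) <= K) ->
  is_series (fun n => m n * r ^ n) 0 -> Rabs (m O) <= K * r / (1 - r).
Proof.
  intros Hr Hm Hs.
  set (T := fun k => m (S k) * r ^ S k).
  set (G := fun k => K * r * r ^ k).
  assert (HT : is_series T (- m O)).
  { apply (is_series_incr_1 (fun n => m n * r ^ n)).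
    unfold plus; simpl; replace (- m O + m O * 1) with 0 by ring.
    exact Hs. }
  assert (HG : is_series G (K * r / (1 - r))).
  { apply (is_series_scal (K * r) (fun k => r ^ k)), is_series_geom.
    rewrite Rabs_pos_eq; lra. }
  assert (HTG : forall k, 0 <= Rabs (T k) <= G k).
  { intros k; split; [apply Rabs_pos|]; unfold T, G.
    rewrite Rabs_mult, (Rabs_pos_eq (r ^ S k)) by (apply pow_le; lra); simpl.
    pose proof (pow_le r k ltac:(lra)).
    replace (K * r * r ^ k) with (K * (r * r ^ k)) by ring.
    apply Rmult_le_compat_r; [apply Rmult_le_pos; lra | apply Hm]. }
  assert (HexG : ex_series G) by (eexists; eauto).
  assert (HexT : ex_series (fun k => Rabs (T k))).
  { apply (@ex_series_le R_AbsRing R_CompleteNormedModule _ G); auto.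
    intros k; change (norm (Rabs (T k))) with (Rabs (Rabs (T k))).
    rewrite Rabs_Rabsolu; apply HTG. }
  pose proof (Series_Rabs T HexT) as H1.
  pose proof (Series_le _ _ HTG HexG) as H2.
  rewrite (is_series_unique _ _ HT), Rabs_Ropp in H1.
  rewrite (is_series_unique _ _ HG) in H2.
  lra.
Qed.

Lemma is_series_power_shift (m : nat -> R) r :
  r <> 0 -> m O = 0 -> is_series (fun n => m n * r ^ n) 0 ->
  is_series (fun n => m (S n) * r ^ n) 0.
Proof.
  intros Hr Hm0 Hs.
  assert (H1 : is_series (fun k => m (S k) * r ^ S k) 0).
  { apply (is_series_incr_1 (fun n => m n * r ^ n)).
    unfold plus; simpl; rewrite Hm0, Rmult_0_l, Rplus_0_r.
    exact Hs. }
  apply (is_series_scal (/ r)) in H1.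
  unfold scal in H1; simpl in H1; unfold mult in H1; simpl in H1.
  rewrite Rmult_0_r in H1.
  eapply is_series_ext; [|exact H1].
  intros n; simpl; field; exact Hr.
Qed.

Lemma is_series_integer_power_zero (K : nat) (m : nat -> Z) :
  (forall n, Rabs (IZR (m n)) <= INR K) ->
  is_series (fun n => IZR (m n) * (/ (INR K + 2)) ^ n) 0 ->
  forall n, m n = 0%Z.
Proof.
  intros Hm Hs n; revert m Hm Hs.
  pose proof (pos_INR K) as HK.
  assert (Hr : 0 < / (INR K + 2) < 1).
  { split; [apply Rinv_0_lt_compat; lra|].
    rewrite <- Rinv_1; apply Rinv_lt_contravar; lra. }
  assert (Hhead : forall m : nat -> Z, (forall n, Rabs (IZR (m n)) <= INR K) ->
    is_series (fun n => IZR (m n) * (/ (INR K + 2)) ^ n) 0 -> m O = 0%Z).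
  { intros m Hm Hs.
    pose proof (is_series_power_head_bound (fun n => IZR (m n)) _ _ Hr Hm Hs) as Hb.
    replace (INR K * / (INR K + 2) / (1 - / (INR K + 2))) with (1 - / (INR K + 1))
      in Hb by (field; lra).
    pose proof (Rinv_0_lt_compat (INR K + 1) ltac:(lra)).
    apply one_IZR_lt1; apply Rabs_le_between in Hb; lra. }
  induction n as [|n IH]; intros m Hm Hs; [exact (Hhead m Hm Hs)|].
  apply (IH (fun k => m (S k))); [intros; apply Hm|].
  apply (is_series_power_shift (fun k => IZR (m k))); [lra| |exact Hs].
  rewrite (Hhead m Hm Hs); reflexivity.
Qed.

Lemma ex_series_select (f : nat -> R) (eps : nat -> bool) :
  ex_series (fun i => Rabs (f i)) -> ex_series (fun i => if eps i then f i else 0).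
Proof.
  intros Hf; apply ex_series_Rabs.
  refine (@ex_series_le R_AbsRing R_CompleteNormedModule _ _ _ Hf).
  intros i; change (norm (Rabs ?x)) with (Rabs (Rabs x)); rewrite Rabs_Rabsolu.
  destruct (eps i); [lra | rewrite Rabs_R0; apply Rabs_pos].
Qed.

Lemma psum_select_two (f : nat -> R) t L : (t < L)%nat ->
  psum (fun j => if (Nat.eqb j t || Nat.eqb j L)%bool then f j else 0) (S L) = f t + f L.
Proof.
  intros Ht; simpl psum; rewrite Nat.eqb_refl, Bool.orb_true_r.
  rewrite (psum_ext _ (fun j => if Nat.eqb j t then f j else 0)).
  - rewrite psum_delta by exact Ht; reflexivity.
  - intros j Hj; destruct (Nat.eqb_spec j L); [lia|]; rewrite Bool.orb_false_r; reflexivity.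
Qed.

(* The last entry of each block is [nth (length P) P 0 * a n = 0]. *)
Definition xseq (P : list R) (a : nat -> R) : nat -> R :=
  blockwise (S (length P)) (fun n j => nth j P 0 * a n).

Definition yseq (L : nat) : nat -> R :=
  blockwise (S L) (fun n j =>
    if Nat.ltb j L then (/ (INR L + 2)) ^ n else - (/ (INR L + 2)) ^ n).

Lemma ex_series_abs_xseq P a :
  ex_series (fun n => Rabs (a n)) -> ex_series (fun i => Rabs (xseq P a i)).
Proof.
  intros Ha; apply (ex_series_of_blocksum_nonneg (S (length P))); [lia | intros; apply Rabs_pos |].
  apply (ex_series_ext (fun n => scal (psum (fun j => Rabs (nth j P 0)) (S (length P))) (Rabs (a n)))).
  - intros n; change (scal ?c ?x) with (c * x).
    rewrite <- psum_mult_r; apply psum_ext; intros j Hj.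
    unfold xseq; rewrite blockwise_at by exact Hj; symmetry; apply Rabs_mult.
  - exact (ex_series_scal _ _ Ha).
Qed.

Lemma ex_series_abs_yseq L : ex_series (fun i => Rabs (yseq L i)).
Proof.
  set (r := / (INR L + 2)).
  pose proof (pos_INR L) as HL.
  assert (Hr : 0 < r < 1).
  { split; [apply Rinv_0_lt_compat; lra|].
    rewrite <- Rinv_1; apply Rinv_lt_contravar; lra. }
  apply (ex_series_of_blocksum_nonneg (S L)); [lia | intros; apply Rabs_pos |].
  apply (ex_series_ext (fun n => scal (INR (S L)) (r ^ n))).
  - intros n; change (scal ?c ?x) with (c * x).
    rewrite <- psum_const; apply psum_ext; intros j Hj.
    unfold yseq; rewrite blockwise_at by exact Hj.
    symmetry; destruct (Nat.ltb j L); rewrite ?Rabs_Ropp; apply Rabs_pos_eq, pow_le; lra.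
  - apply (ex_series_scal _ (fun n => r ^ n)), ex_series_geom; rewrite Rabs_pos_eq; lra.
Qed.

Lemma count_block_le_1 L (eps : nat -> bool) : (0 < L)%nat ->
  is_series (fun i => if eps i then yseq L i else 0) 0 ->
  forall n, (count_true (fun j => eps (n * S L + j)%nat) L <= 1)%nat.
Proof.
  intros HL Hs.
  set (c := fun n => count_true (fun j => eps (n * S L + j)%nat) L).
  set (b := fun n => if eps (n * S L + L)%nat then 1%nat else 0%nat).
  set (m := fun n => (Z.of_nat (c n) - Z.of_nat (b n))%Z).
  assert (Hm : forall n, IZR (m n) = INR (c n) - INR (b n)).
  { intros n; unfold m; rewrite minus_IZR, <- !INR_IZR_INZ; reflexivity. }
  assert (Hblock : forall n, blocksum (S L) (fun i => if eps i then yseq L i else 0) n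
                             = IZR (m n) * (/ (INR L + 2)) ^ n).
  { intros n; unfold blocksum; simpl psum.
    unfold yseq at 2; rewrite blockwise_at, Nat.ltb_irrefl, Hm by lia.
    rewrite (psum_ext _ (fun j => if eps (n * S L + j)%nat then (/ (INR L + 2)) ^ n else 0)).
    - rewrite psum_indicator; unfold b, c; destruct (eps _); simpl; ring.
    - intros j Hj; unfold yseq; rewrite blockwise_at by lia.
      destruct (Nat.ltb_spec j L); [reflexivity | lia]. }
  assert (Hzero : forall n, m n = 0%Z).
  { apply (is_series_integer_power_zero L).
    - intros n; rewrite Hm; apply Rabs_le.
      pose proof (le_INR _ _ (count_true_le _ L : (c n <= L)%nat)).
      pose proof (le_INR _ _ HL); pose proof (pos_INR (c n)).
      unfold b; destruct (eps _); simpl in *; lra.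
    - apply (is_series_ext (blocksum (S L) (fun i => if eps i then yseq L i else 0)));
        [exact Hblock | apply is_series_blocksum; [lia | exact Hs]]. }
  intros n; specialize (Hzero n); unfold m, b in Hzero; fold (c n).
  destruct (eps _); lia.
Qed.

Lemma P_sums_of_zero_slice P a (eps : nat -> bool) s : In 0 P ->
  is_series (fun i => if eps i then xseq P a i else 0) s ->
  is_series (fun i => if eps i then yseq (length P) i else 0) 0 ->
  P_sums P a s.
Proof.
  intros hP0 Hx Hy; set (L := length P) in *.
  assert (HL : (0 < L)%nat) by (unfold L; destruct P; [destruct hP0 | simpl; lia]).
  pose proof (count_block_le_1 L eps HL Hy) as Hcount.
  exists (fun n => psum (fun j => if eps (n * S L + j)%nat then nth j P 0 else 0) L).
  split.
  - intros n; apply psum_select_In; [exact hP0 | | apply Hcount].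
    intros j Hj; apply nth_In; exact Hj.
  - apply (is_series_ext (blocksum (S L) (fun i => if eps i then xseq P a i else 0)));
      [|apply is_series_blocksum; [lia | exact Hx]].
    intros n; unfold blocksum.
    rewrite (psum_ext _ (fun j => (if eps (n * S L + j)%nat then nth j P 0 else 0) * a n)).
    + rewrite psum_mult_r; simpl psum; rewrite nth_overflow, Rmult_plus_distr_r by lia.
      destruct (eps (n * S L + L)%nat); rewrite Rmult_0_l; apply Rplus_0_r.
    + intros j Hj; unfold xseq; rewrite blockwise_at by exact Hj.
      destruct (eps _); ring.
Qed.

Lemma zero_slice_of_P_sums P a s :
  ex_series (fun n => Rabs (a n)) -> P_sums P a s ->
  exists eps : nat -> bool,
    is_series (fun i => if eps i then xseq P a i else 0) s /\
    is_series (fun i => if eps i then yseq (length P) i else 0) 0.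
Proof.
  intros Ha [e [HeP He]]; set (L := length P).
  assert (Hidx : forall n, {j | (j < L)%nat /\ nth j P 0 = e n})
    by (intros n; apply constructive_indefinite_description, In_nth, HeP).
  set (idx := fun n => proj1_sig (Hidx n)).
  assert (Hidx_lt : forall n, (idx n < L)%nat) by (intros n; apply (proj2_sig (Hidx n))).
  assert (Hidx_nth : forall n, nth (idx n) P 0 = e n) by (intros n; apply (proj2_sig (Hidx n))).
  (* In block [n], choose the entry [e n] of [P] and the compensating last entry. *)
  exists (blockwise (S L) (fun n j => Nat.eqb j (idx n) || Nat.eqb j L)%bool).
  split.
  - apply (is_series_of_blocksum (S L)); [lia | apply ex_series_select, ex_series_abs_xseq, Ha |].
    apply (is_series_ext (fun n => e n * a n)); [|exact He].
    intros n; unfold blocksum, xseq.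
    rewrite (psum_ext _ (fun j => if (Nat.eqb j (idx n) || Nat.eqb j L)%bool
                                  then nth j P 0 * a n else 0)).
    + rewrite psum_select_two, Hidx_nth, nth_overflow by (apply Hidx_lt || lia).
      rewrite Rmult_0_l, Rplus_0_r; reflexivity.
    + intros j Hj; rewrite !blockwise_at by exact Hj; reflexivity.
  - apply (is_series_of_blocksum (S L)); [lia | apply ex_series_select, ex_series_abs_yseq |].
    apply (is_series_ext (fun _ => 0)).
    + intros n; unfold blocksum, yseq.
      rewrite (psum_ext _ (fun j => if (Nat.eqb j (idx n) || Nat.eqb j L)%bool
          then (if Nat.ltb j L then (/ (INR L + 2)) ^ n else - (/ (INR L + 2)) ^ n) else 0)).
      * rewrite psum_select_two, Nat.ltb_irrefl by apply Hidx_lt.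
        destruct (Nat.ltb_spec (idx n) L); [| specialize (Hidx_lt n); lia].
        symmetry; apply Rplus_opp_r.
      * intros j Hj; rewrite !blockwise_at by exact Hj; reflexivity.
    + change (is_lim_seq (sum_n (fun _ => 0)) 0).
      apply (is_lim_seq_ext (fun _ => 0)); [|apply is_lim_seq_const].
      intros N; rewrite sum_n_psum, psum_const; ring.
Qed.

Theorem theorem4p1 (P : list R) (a : nat -> R)
  (hP0 : In 0 P)
  (ha_abs : ex_series (fun n => Rabs (a n)))
  (ha_mono : forall n, Rabs (a n) >= Rabs (a (S n)) /\ Rabs (a (S n)) > 0) :
  exists x y : nat -> R,
    ex_series (fun n => Rabs (x n) + Rabs (y n)) /\
    (forall s, slice (achievement_set2 x y) 0 s <-> P_sums P a s).
Proof.
  exists (xseq P a), (yseq (length P)); split.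
  - exact (ex_series_plus _ _ (ex_series_abs_xseq P a ha_abs) (ex_series_abs_yseq (length P))).
  - intros s; split.
    + intros [eps [Hx Hy]]; exact (P_sums_of_zero_slice P a eps s hP0 Hx Hy).
    + intros Hs; exact (zero_slice_of_P_sums P a s ha_abs Hs).
Qed.
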